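(* Let $X=\{x_1,\dots,x_n\}$ be a set of Boolean variables and $\mathcal{C}=\{C_1,\dots,C_m\}$ a set of clauses, each consisting of exactly three positive literals. Let $G'$ be the graph constructed from $(\mathcal{C},X)$ as described in the context. Then there is a truth assignment for $X$ such that every clause contains at least one true literal and at least one false literal if and only if $G'$ has a $5$-colouring.
   Context: First construct $(G,L)$: for each $x_i\in X$ introduce two adjacent vertices $x_i$ and $\overline{x}_i$ with $L(x_i)=L(\overline{x}_i)=\{4,5\}$. For each clause $C_j$ introduce two vertices $C_j,C_j'$ with $L(C_j)=L(C_j')=\{1,2,3\}$. Add an edge between every vertex of the form $x_i$ or $\overline{x}_i$ and every vertex of the form $C_j$ or $C_j'$. For each clause $C_j$, fix an order of its literals, say $C_j=\{x_g,x_h,x_i\}$, and add six new vertices $a_{g,j},a_{h,j},a_{i,j},a'_{g,j},a'_{h,j},a'_{i,j}$ with edges $x_ga_{g,j}$, $a_{g,j}C_j$, $x_ha_{h,j}$, $a_{h,j}C_j$, $x_ia_{i,j}$, $a_{i,j}C_j$, $\overline{x}_ga'_{g,j}$, $a'_{g,j}C_j'$, $\overline{x}_ha'_{h,j}$, $a'_{h,j}C_j'$, $\overline{x}_ia'_{i,j}$, $a'_{i,j}C_j'$, and lists $L(a_{g,j})=L(a'_{g,j})=\{1,4\}$, $L(a_{h,j})=L(a'_{h,j})=\{2,4\}$, $L(a_{i,j})=L(a'_{i,j})=\{3,4\}$. Then $G'$ is obtained from $G$ by adding a clique on five new vertices $k_1,\dots,k_5$ and adding an edge between $k_\ell$ and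 a vertex $u\in V(G)$ if and only if $\ell\notin L(u)$. A $5$-colouring is a map from vertices to $\{1,\dots,5\}$ giving adjacent vertices distinct colours. *)

From mathcomp Require Import all_boot.
Set Implicit Arguments. Unset Strict Implicit. Unset Printing Implicit Defensive.

(* Instance: n variables x_0..x_{n-1}, m clauses C_0..C_{m-1}.
   cl j t : 'I_n is the variable of the t-th literal (t = 0,1,2 ~ g,h,i)
   of clause C_j in the fixed order. All literals are positive. *)

Inductive gvert (n m : nat) : Type :=
  | VX  of 'I_n
  | VXb of 'I_n
  | VC  of 'I_m
  | VC' of 'I_m
  | VA  of 'I_m & 'I_3    (* a_{cl j t, j} *)
  | VA' of 'I_m & 'I_3.   (* a'_{cl j t, j} *)

Definition L n m (u : gvert n m) : seq nat :=
  match u with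
  | VX _ | VXb _ => [:: 4; 5]
  | VC _ | VC' _ => [:: 1; 2; 3]
  | VA _ t | VA' _ t => [:: t.+1; 4]
  end.

Definition gE n m (cl : 'I_m -> 'I_3 -> 'I_n) (u v : gvert n m) : bool :=
  match u, v with
  | VX i, VXb i' => i == i'
  | VX _, VC _ | VX _, VC' _ | VXb _, VC _ | VXb _, VC' _ => true
  | VX i, VA j t => cl j t == i
  | VA j t, VC j' => j == j'
  | VXb i, VA' j t => cl j t == i
  | VA' j t, VC' j' => j == j'
  | _, _ => false
  end.

Definition gadj n m (cl : 'I_m -> 'I_3 -> 'I_n) (u v : gvert n m) : bool :=
  gE cl u v || gE cl v u.

(* Vertices of G': old vertices of G plus the clique k_1..k_5
   (VK l stands for k_{l+1}). *)
Inductive gpvert (n m : nat) : Type :=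
  | Old of gvert n m
  | VK of 'I_5.

Definition gpadj n m (cl : 'I_m -> 'I_3 -> 'I_n) (u v : gpvert n m) : bool :=
  match u, v with
  | Old a, Old b => gadj cl a b
  | VK a, VK b => a != b
  | VK l, Old w | Old w, VK l => l.+1 \notin L w
  end.

Definition five_colouring n m (cl : 'I_m -> 'I_3 -> 'I_n)
    (c : gpvert n m -> nat) : Prop :=
  (forall v, 1 <= c v <= 5) /\ (forall u v, gpadj cl u v -> c u != c v).

Definition nae_assignment n m (cl : 'I_m -> 'I_3 -> 'I_n) (phi : 'I_n -> bool) :=
  forall j : 'I_m, (exists t, phi (cl j t)) /\ (exists t, ~~ phi (cl j t)).

From mathcomp Require Import all_boot zify.
Set Implicit Arguments. Unset Strict Implicit. Unset Printing Implicit Defensive.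

(* The clique k_1, ..., k_5 receives all five colours, so a 5-colouring of G'
   is, up to renaming colours, the same as a colouring of G from the lists L.
   In such a colouring, if C_j has colour t+1 then its neighbour a_{t,j} (list
   {t+1, 4}) has colour 4, so the t-th literal x of C_j does not; if C'_j has
   colour t+1 then a'_{t,j} gets 4, the vertex x-bar of the t-th literal gets 5
   and that literal gets 4.  Hence "x_i has colour 4" is a not-all-equal
   assignment.  Conversely, colour the true literals 4, the false ones 5, C_j
   by the index of a false literal and C'_j by the index of a true one. *)

Arguments VX {n m}. Arguments VXb {n m}. Arguments VC {n m}.
Arguments VC' {n m}. Arguments VA {n m}. Arguments VA' {n m}.
Arguments VK {n m}.

Lemma inj_bounded_onto k (f : 'I_k -> nat) :
  injective f -> (forall l, 0 < f l <= k) ->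
  forall x, 0 < x <= k -> exists l, f l = x.
Proof.
move=> f_inj f_bd x x_bd.
have codom_sub : {subset codom f <= iota 1 k}.
  by move=> _ /codomP[l ->]; move: (f_bd l); rewrite mem_iota; lia.
have codom_uniq : uniq (codom f).
  by rewrite /codom /image_mem map_inj_uniq // enum_uniq.
have codom_size : size (iota 1 k) <= size (codom f).
  by rewrite size_iota size_codom card_ord.
have [_ codom_eq] := uniq_min_size codom_uniq codom_sub codom_size.
have : x \in codom f by rewrite codom_eq mem_iota; lia.
by case/codomP=> l ->; exists l.
Qed.

Lemma mem123_ord x : x \in [:: 1; 2; 3] -> exists t : 'I_3, x = t.+1.
Proof.
case: x => [|[|[|[|x]]]] // _.
- by exists (@Ordinal 3 0 isT).
- by exists (@Ordinal 3 1 isT).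
- by exists (@Ordinal 3 2 isT).
Qed.

Section Reduction.

Variables (n m : nat) (cl : 'I_m -> 'I_3 -> 'I_n).

Definition L_colouring (d : gvert n m -> nat) :=
  (forall u, d u \in L u) /\ (forall u v, gadj cl u v -> d u != d v).

Lemma L_bounded (u : gvert n m) x : x \in L u -> 0 < x <= 5.
Proof. by move: x; apply/allP; case: u => // j [[|[|[|]]] ?]. Qed.

Definition clique_extension (d : gvert n m -> nat) (w : gpvert n m) : nat :=
  match w with Old u => d u | VK l => l.+1 end.

Lemma five_colouring_clique_extension d :
  L_colouring d -> five_colouring cl (clique_extension d).
Proof.
case=> dL d_proper; split=> [[u|l]|[u|l] [v|l']] /=.
- exact: L_bounded (dL u).
- by move: (ltn_ord l); lia.
- exact: d_proper.
- by apply: contraNneq => <-.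
- by apply: contraNneq => ->.
- by apply: contraNneq => /succn_inj/val_inj ->.
Qed.

Lemma L_colouring_of_five_colouring c :
  five_colouring cl c -> exists d, L_colouring d.
Proof.
case=> c_range c_proper.
have K_inj : injective (fun l => c (VK l)).
  by move=> a b; apply: contra_eq => /(c_proper (VK a) (VK b)).
have K_onto u : exists l, c (VK l) == c (Old u).
  have [l Kl] := inj_bounded_onto K_inj (fun l => c_range _) (c_range (Old u)).
  by exists l; rewrite Kl.
pose lab u := xchoose (K_onto u).
have labP u : c (VK (lab u)) = c (Old u) := eqP (xchooseP (K_onto u)).
exists (fun u => (lab u).+1); split=> [u|u v uv].
- apply: contraT => not_in_L.
  have := c_proper _ _ (not_in_L : gpadj cl (VK (lab u)) (Old u)).
  by rewrite labP eqxx.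
- apply: contraNneq (c_proper _ _ (uv : gpadj cl (Old u) (Old v))).
  by move=> /succn_inj/val_inj lab_uv; rewrite -labP lab_uv labP.
Qed.

Section NaeColouring.

Variable phi : 'I_n -> bool.
Hypothesis phi_nae : nae_assignment cl phi.

Let true_lit j := xchoose (phi_nae j).1.
Let false_lit j := xchoose (phi_nae j).2.

Definition nae_colour (u : gvert n m) : nat :=
  match u with
  | VX i => if phi i then 4 else 5
  | VXb i => if phi i then 5 else 4
  | VC j => (false_lit j).+1
  | VC' j => (true_lit j).+1
  | VA j t => if phi (cl j t) then t.+1 else 4
  | VA' j t => if phi (cl j t) then 4 else t.+1
  end.

Lemma nae_colour_in_L u : nae_colour u \in L u.
Proof.
case: u => [i|i|j|j|j t|j t] /=; rewrite !inE.
- by case: (phi i).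
- by case: (phi i).
- by case: (false_lit j) => [[|[|[|]]] ?].
- by case: (true_lit j) => [[|[|[|]]] ?].
- by case: (phi _); rewrite eqxx ?orbT.
- by case: (phi _); rewrite eqxx ?orbT.
Qed.

Lemma nae_colour_gE u v : gE cl u v -> nae_colour u != nae_colour v.
Proof.
have lt4 (t : 'I_3) : t.+1 < 4 := ltn_ord t.
case: u v => [i|i|j|j|j t|j t] [i'|i'|j'|j'|j' t'|j' t'] //=;
  try move=> /eqP<-; try move=> _.
- by case: (phi i).
- by case: (phi i) => /=; move: (lt4 (false_lit j')); lia.
- by case: (phi i) => /=; move: (lt4 (true_lit j')); lia.
- by case: (phi _) => /=; move: (lt4 t'); lia.
- by case: (phi i) => /=; move: (lt4 (false_lit j')); lia.
- by case: (phi i) => /=; move: (lt4 (true_lit j')); lia.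
- by case: (phi _) => /=; move: (lt4 t'); lia.
- case: ifP => [phi_t|_]; last by move: (lt4 (false_lit j)); lia.
  rewrite eqSS; apply: contraTneq phi_t => /val_inj->.
  exact: xchooseP (phi_nae j).2.
- case: ifP => [_|phi_t]; first by move: (lt4 (true_lit j)); lia.
  rewrite eqSS; apply: contraFneq phi_t => /val_inj->.
  exact: xchooseP (phi_nae j).1.
Qed.

Lemma L_colouring_nae_colour : L_colouring nae_colour.
Proof.
split=> [|u v]; first exact: nae_colour_in_L.
by case/orP=> /nae_colour_gE; rewrite // eq_sym.
Qed.

End NaeColouring.

Section ColouringNae.

Variable d : gvert n m -> nat.
Hypothesis d_L : L_colouring d.

Lemma L_colouring_forced u v a b :
  gadj cl u v -> perm_eq (L u) [:: a; b] -> d v = a -> d u = b.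
Proof.
case: d_L => dL d_proper uv Lu dv.
have := dL u; rewrite (perm_mem Lu) !inE => /orP[/eqP du|/eqP //].
by have := d_proper u v uv; rewrite du dv eqxx.
Qed.

Lemma nae_of_L_colouring : nae_assignment cl (fun i => d (VX i) == 4).
Proof.
case: d_L => dL _ j; split.
- have [t Ct] := mem123_ord (dL (VC' j)).
  exists t.
  have A't : d (VA' j t) = 4.
    by apply: L_colouring_forced Ct; rewrite /gadj /= ?eqxx ?perm_refl.
  have Xbt : d (VXb (cl j t)) = 5.
    by apply: L_colouring_forced A't; rewrite /gadj /= ?eqxx.
  have Xt : d (VX (cl j t)) = 4.
    by apply: L_colouring_forced Xbt; rewrite /gadj /= ?eqxx.
  by rewrite Xt.
- have [t Ct] := mem123_ord (dL (VC j)).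
  exists t.
  have At : d (VA j t) = 4.
    by apply: L_colouring_forced Ct; rewrite /gadj /= ?eqxx ?perm_refl.
  have Xt : d (VX (cl j t)) = 5.
    by apply: L_colouring_forced At; rewrite /gadj /= ?eqxx.
  by rewrite Xt.
Qed.

End ColouringNae.

End Reduction.

Theorem lemma2 (n m : nat) (cl : 'I_m -> 'I_3 -> 'I_n)
  (Hdistinct : forall j : 'I_m, injective (cl j)) :
  (exists phi : 'I_n -> bool, nae_assignment cl phi) <->
  (exists c : gpvert n m -> nat, five_colouring cl c).
Proof.
(* The literals of a clause need not be distinct for the reduction. *)
split=> [[phi phi_nae] | [c c_col]].
- exists (clique_extension (nae_colour phi_nae)).
  exact/five_colouring_clique_extension/L_colouring_nae_colour.
- have [d d_L] := L_colouring_of_five_colouring c_col.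
  by exists (fun i => d (VX i) == 4); apply: nae_of_L_colouring.
Qed.
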